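(* Let $z_1,\dots,z_n$ be distinct points of the unit circle and $\xi_1,\dots,\xi_m$ distinct points of $\mathbb{C}\setminus\{0\}$, distinct from the $z_j$. The following are equivalent: (1) the set $\{\xi_1,\dots,\xi_m\}$ is invariant under $\xi\mapsto1/\bar\xi$, and $\boldsymbol z,\boldsymbol\xi$ satisfy the stationary relations $$-\sum_{j=1}^n\frac{2}{\xi_k-z_j}+\sum_{l\neq k}\frac{4}{\xi_k-\xi_l}+\frac{n-2m+2}{\xi_k}=0,\qquad k=1,\dots,m;$$ (2) there exists a quadratic differential $Q(z)dz^2\in\mathcal{QD}_{m,n}(\boldsymbol z)$ whose poles (other than $0,\infty$) are $\xi_1,\dots,\xi_m$ and whose zeros (other than $0,\infty$) are $z_1,\dots,z_n$.
   Context: $\mathcal{QD}_{m,n}(\boldsymbol z)$ denotes the set of meromorphic quadratic differentials $Q(z)dz^2$ on the Riemann sphere such that: (1) $Q$ is involution symmetric, $\overline{Q(z^* )}\,\overline{(dz^* )^2}=Q(z)dz^2$ with $z^*=1/\bar z$, i.e. $Q(z)=z^{-4}\,\overline{Q(1/\bar z)}$; (2) $z_1,\dots,z_n$ are zeros of order exactly $2$; (3) $\xi_1,\dots,\xi_m$ are distinct finite nonzero poles of order $4$ at which the residue of $\sqrt{Q(z)}\,dz$ vanishes (this residue is well defined up to sign since the pole has even order); (4) $Q$ has a pole of order $n+2-2m$ at $0$ and at $\infty$ (a negative order meaning a zero of the opposite order); and $Q$ has no other zeros or poles. *)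

From HB Require Import structures.
From mathcomp Require Import all_boot all_order all_algebra.
From mathcomp Require Import reals.
From mathcomp Require Import complex.
Set Implicit Arguments. Unset Strict Implicit. Unset Printing Implicit Defensive.
Import Order.TTheory GRing.Theory Num.Theory.
Local Open Scope ring_scope.
Local Open Scope complex_scope.

Section QD.
Variable R : realType.
Notation C := (R[i]).

(* A meromorphic function on the Riemann sphere is a rational function;
   we represent Q = P / D with polynomials P, D (D <> 0).  The representation
   need not be reduced: orders are computed as differences of multiplicities. *)

Definition ord_at (P D : {poly C}) (a : C) : int :=
  (mup a P)%:Z - (mup a D)%:Z.

(* order of the QUADRATIC DIFFERENTIAL (P/D) dz^2 at infinity:
   in w = 1/z, Q(z) dz^2 = Q(1/w) w^-4 dw^2, so the order is
   (deg D - deg P) - 4. *)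
Definition qd_ord_inf (P D : {poly C}) : int :=
  ((size D)%:Z - (size P)%:Z) - 4.

(* the holomorphic nonvanishing part g of Q = (z - a)^(ord) * g near a *)
Definition loc_num (P : {poly C}) (a : C) : {poly C} :=
  P %/ ('X - a%:P) ^+ (mup a P).

Definition loc_val (P D : {poly C}) (a : C) : C :=
  (loc_num P a).[a] / (loc_num D a).[a].
Definition loc_der (P D : {poly C}) (a : C) : C :=
  ((loc_num P a)^`().[a] * (loc_num D a).[a]
     - (loc_num P a).[a] * (loc_num D a)^`().[a]) / ((loc_num D a).[a] ^+ 2).

(* At a pole a of order 4, Q = (z-a)^-4 (g(a) + g'(a)(z-a) + ...), and a square root
   of Q has Laurent expansion (z-a)^-2 (s0 + s1 (z-a) + ...) with
   s0^2 = g(a), 2 s0 s1 = g'(a); the residue of sqrt(Q) dz at a is s1.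
   It vanishes (for either choice of sign) iff every such s1 is 0. *)
Definition sqrt_res_vanishes (P D : {poly C}) (a : C) : Prop :=
  forall s0 s1 : C, s0 ^+ 2 = loc_val P D a ->
    2%:R * s0 * s1 = loc_der P D a -> s1 = 0.

Definition in_QD (m n : nat) (z : 'I_n -> C) (xi : 'I_m -> C) (P D : {poly C}) : Prop :=
  P != 0 /\ D != 0 /\
      (forall w : C, w != 0 -> D.[w] != 0 -> D.[(w^*)^-1] != 0 ->
         P.[w] / D.[w] = w ^- 4 * (P.[(w^*)^-1] / D.[(w^*)^-1])^*) /\
      (forall j, ord_at P D (z j) = 2) /\
      [/\ injective xi, (forall k, xi k != 0),
          (forall k, ord_at P D (xi k) = - 4) &
          (forall k, sqrt_res_vanishes P D (xi k))] /\
      (ord_at P D 0 = - ((n%:Z) + 2 - 2 * (m%:Z)) /\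
       qd_ord_inf P D = - ((n%:Z) + 2 - 2 * (m%:Z))) /\
      (forall a : C, a != 0 -> (forall j, a != z j) -> (forall k, a != xi k) ->
         ord_at P D a = 0).

End QD.

From HB Require Import structures.
From mathcomp Require Import all_boot all_order all_algebra.
From mathcomp Require Import reals complex.
From mathcomp Require Import ring zify.
Set Implicit Arguments. Unset Strict Implicit. Unset Printing Implicit Defensive.
Import Order.TTheory GRing.Theory Num.Theory.
Local Open Scope ring_scope.

(* The quadratic differentials with the prescribed zeros and poles are, up to
   a constant kp, Q0 := qnum / qden = z^(2m-n-2) prod_j (z - z_j)^2 / prod_l (z - xi_l)^4,
   since a rational function is determined by its divisor up to a constant.
   Near xi_k we have Q = (z - xi_k)^-4 g with g(xi_k) <> 0, and the residue of
   sqrt(Q) dz is g'(xi_k) / (2 sqrt g(xi_k)); it vanishes iff the logarithmic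
   derivative of g = kp qnum / qden_without k vanishes at xi_k, and that
   logarithmic derivative is the k-th stationary relation.
   As |z_j| = 1, the reflection w^-4 conj(Q(1/conj w)) of Q has the same zeros
   and poles at the points 1/conj(xi_l), with the constant kp^* Ac / Bc in place
   of kp (Ac = zeros_refl_coef, Bc = poles_refl_coef); so Q is involution
   symmetric iff the poles are closed under reflection and kp Bc = kp^* Ac. Closure of the poles forces |prod_l xi_l| = 1, hence
   |Ac| = |Bc|, and then kp = sqrt(Ac conj Bc) works. *)

Section FieldPoly.
Variable F : fieldType.
Implicit Types (p q u v : {poly F}) (a c x : F).

Lemma prod_XsubC_exp_neq0 (I : finType) (P : pred I) (b : I -> F) (e : I -> nat) :
  \prod_(i | P i) ('X - (b i)%:P) ^+ e i != 0.
Proof. by apply/prodf_neq0 => i _; rewrite expf_neq0 // polyXsubC_eq0. Qed.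

Lemma mup_prod_XsubC_exp (I : finType) (b : I -> F) (e : I -> nat) a :
  mup a (\prod_i ('X - (b i)%:P) ^+ e i) = (\sum_(i | b i == a) e i)%N.
Proof.
rewrite [RHS]big_mkcond /=; set p := \prod_i _; set s := (\sum_i _)%N.
suff [] : p != 0 /\ mup a p = s by [].
apply: (big_ind2 (fun p s => p != 0 /\ mup a p = s)) => [|p1 s1 p2 s2 [p1_0 <-] [p2_0 <-]|i _].
- by rewrite oner_neq0 mupNroot ?root1.
- by rewrite mulf_neq0 // mupM.
- by rewrite expf_neq0 ?polyXsubC_eq0 // mup_XsubCX.
Qed.

Lemma mup_prod_XsubC_exp_inj (I : finType) (b : I -> F) (e : I -> nat) i :
  injective b -> mup (b i) (\prod_i ('X - (b i)%:P) ^+ e i) = e i.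
Proof.
move=> b_inj; rewrite mup_prod_XsubC_exp (big_pred1 i) // => j.
by rewrite /= inj_eq.
Qed.

Lemma mup_prod_XsubC_exp_notin (I : finType) (b : I -> F) (e : I -> nat) a :
  (forall i, b i != a) -> mup a (\prod_i ('X - (b i)%:P) ^+ e i) = 0%N.
Proof. by move=> ba; rewrite mup_prod_XsubC_exp big_pred0 // => i; apply/negbTE. Qed.

Lemma mup_Xn a k : mup a 'X^k = if a == 0 then k else 0%N.
Proof. by rewrite -['X]subr0 -polyC0 mup_XsubCX eq_sym. Qed.

Lemma mupZ a c p : c != 0 -> mup a (c *: p) = mup a p.
Proof. by move=> c0; rewrite -mul_polyC mupMr ?rootC. Qed.

Lemma size_prod_XsubC_exp (I : finType) (b : I -> F) (e : I -> nat) :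
  size (\prod_i ('X - (b i)%:P) ^+ e i) = (\sum_i e i).+1.
Proof.
set p := \prod_i _; suff [] : p \is monic /\ size p = (\sum_i e i).+1 by [].
apply: (big_ind2 (fun p s => p \is monic /\ size p = s.+1)) => [|p1 s1 p2 s2 [m1 z1] [m2 z2]|i _].
- by rewrite monic1 size_poly1.
- by rewrite monicMl // size_Mmonic ?monic_neq0 // z1 z2 addSn addnS.
- by rewrite monic_exp ?monicXsubC // size_exp_XsubC.
Qed.

Definition is_logder x p s := p^`().[x] = p.[x] * s.

Lemma is_logderM x p q s t :
  is_logder x p s -> is_logder x q t -> is_logder x (p * q) (s + t).
Proof. by rewrite /is_logder derivM !hornerE => -> ->; ring. Qed.

Lemma is_logder_XsubC_exp x a e :
  x != a -> is_logder x (('X - a%:P) ^+ e) (e%:R / (x - a)).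
Proof.
move=> xa; rewrite /is_logder deriv_exp derivXsubC mul1r hornerMn !horner_exp hornerXsubC.
have xa0 : x - a != 0 by rewrite subr_eq0.
case: e => [|e]; first by rewrite mulr0n mul0r mulr0.
by rewrite exprS -mulr_natr; field.
Qed.

Lemma is_logder_Xn x k : x != 0 -> is_logder x 'X^k (k%:R / x).
Proof. by move=> x0; have := @is_logder_XsubC_exp x 0 k; rewrite polyC0 !subr0; apply. Qed.

Lemma is_logder_prod x (I : finType) (P : pred I) (b : I -> F) (e : I -> nat) :
  (forall i, P i -> x != b i) ->
  is_logder x (\prod_(i | P i) ('X - (b i)%:P) ^+ e i)
              (\sum_(i | P i) (e i)%:R / (x - b i)).
Proof.
move=> xb; apply: (big_ind2 (is_logder x)) => [|? ? ? ?|i /xb]; last exact: is_logder_XsubC_exp.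
- by rewrite /is_logder derivC !hornerE.
- exact: is_logderM.
Qed.

Definition wronskian p q := p^`() * q - p * q^`().

Lemma wronskianM p q u v :
  wronskian (p * u) (q * v) = wronskian p q * (u * v) + (p * q) * wronskian u v.
Proof. by rewrite /wronskian !derivM; ring. Qed.

Lemma wronskian_logder x p q s t : is_logder x p s -> is_logder x q t ->
  (wronskian p q).[x] = p.[x] * q.[x] * (s - t).
Proof. by rewrite /wronskian /is_logder !hornerE => -> ->; ring. Qed.

Lemma wronskian_eq0_proportional p q u v c x :
  c != 0 -> p * u = c%:P * (q * v) -> p.[x] * q.[x] != 0 -> u.[x] * v.[x] != 0 ->
  ((wronskian p q).[x] == 0) = ((wronskian u v).[x] == 0).
Proof.
move=> c0 puqv pq0 uv0.
have W0 : wronskian (p * u) (q * v) = 0.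
  by rewrite puqv /wronskian !derivM derivC; ring.
have := congr1 (horner^~ x) W0; rewrite /= wronskianM hornerD !hornerM horner0.
move=> /eqP; rewrite addr_eq0 => /eqP E; apply/eqP/eqP => [Wpq0|Wuv0].
  by apply/eqP; move: E; rewrite Wpq0 mul0r => /esym /eqP; rewrite oppr_eq0 mulf_eq0 (negbTE pq0).
by apply/eqP; move: E; rewrite Wuv0 mulr0 oppr0 => /eqP; rewrite mulf_eq0 (negbTE uv0) orbF.
Qed.

Lemma horner_div_scale p q u v c x : p * v = c *: (q * u) ->
  q.[x] != 0 -> v.[x] != 0 -> p.[x] / q.[x] = c * u.[x] / v.[x].
Proof.
move=> pv qx0 vx0; have := congr1 (horner^~ x) pv; rewrite /= hornerZ !hornerM => E.
by rewrite -(mulfK vx0 p.[x]) E; field; apply/andP.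
Qed.

End FieldPoly.

Section ClosedFieldPoly.
Variable C : closedFieldType.
Implicit Types p q g h : {poly C}.

Lemma eq_mup_scale p q : p != 0 -> q != 0 -> (forall a, mup a p = mup a q) ->
  exists2 k, k != 0 & p = k *: q.
Proof.
move=> p0 q0 mup_pq.
have [rp Ep] := closed_field_poly_normal p; have [rq Eq] := closed_field_poly_normal q.
have lp0 : lead_coef p != 0 by rewrite lead_coef_eq0.
have lq0 : lead_coef q != 0 by rewrite lead_coef_eq0.
have perm_r : perm_eq rp rq.
  apply/allP => a _ /=; apply/eqP; rewrite -!mu_prod_XsubC.
  by rewrite -(mupZ _ _ lp0) -Ep mup_pq Eq mupZ.
exists (lead_coef p / lead_coef q); first by rewrite mulf_neq0 ?invr_eq0.
by rewrite [X in _ *: X]Eq scalerA divfK // {1}Ep (perm_big _ perm_r).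
Qed.

Lemma poly_eq0_off_roots h g : g != 0 -> (forall w, ~~ root g w -> h.[w] = 0) -> h = 0.
Proof.
move=> g0 hg; apply/eqP/negP => /negP h0.
have /closed_nonrootP[w] : h * g != 0 by rewrite mulf_neq0.
by rewrite rootM negb_or => /andP[/negP + /hg h_w]; rewrite /root h_w eqxx.
Qed.

End ClosedFieldPoly.

Section Reflection.
Variable C : numClosedFieldType.
Implicit Types (p : {poly C}) (a b w : C).

Lemma exists_reflected_roots p : p != 0 ->
  exists2 q, q != 0 & forall w, w != 0 -> ~~ root q w -> ~~ root p (w^*)^-1.
Proof.
move=> p0; have [rs Ep] := closed_field_poly_normal p.
exists (\prod_(x <- map (fun r => (r^*)^-1) rs) ('X - x%:P)).
  exact/monic_neq0/monic_prod_XsubC.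
move=> w w0; apply: contra; rewrite Ep rootZ ?lead_coef_eq0 // !root_prod_XsubC => w_rs.
have -> : w = (((w^*)^-1)^*)^-1 by rewrite fmorphV /= conjCK invrK.
exact: map_f.
Qed.

Lemma exists_conj_ratio a b : `|a| = `|b| -> exists2 c, c != 0 & c * b = c^* * a.
Proof.
have [-> /eqP|b0 ab] := eqVneq b 0.
  by rewrite normr0 normr_eq0 => /eqP ->; exists 1; rewrite ?oner_neq0 ?mulr0.
have a0 : a != 0 by rewrite -normr_eq0 ab normr_eq0.
(* [c^2 = a b^*] and [|c|^2 = |b|^2], so [c^2 b = |c|^2 a]. *)
set c := sqrtC (a * b^*).
have c0 : c != 0 by rewrite sqrtC_eq0 mulf_neq0 ?conjC_eq0.
exists c => //; apply: (mulfI c0).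
have c2 : c * c = a * b^* by rewrite -expr2 sqrtCK.
have cc : c * c^* = b * b^*.
  by rewrite -normCK -normrX expr2 c2 normrM norm_conjC ab -expr2 normCK.
by rewrite mulrA c2 mulrA cc; ring.
Qed.

Lemma conj_horner_refl_XsubC_exp b w e : b != 0 -> w != 0 ->
  ((('X - b%:P) ^+ e).[(w^*)^-1])^* * w ^+ e = (- b^*) ^+ e * (('X - ((b^*)^-1)%:P) ^+ e).[w].
Proof.
move=> b0 w0; rewrite !horner_exp !hornerXsubC rmorphXn -!exprMn; congr (_ ^+ e).
have bc0 : b^* != 0 by rewrite conjC_eq0.
by rewrite rmorphB fmorphV /= conjCK; field; apply/andP.
Qed.

Lemma conj_horner_refl_prod (I : finType) (b : I -> C) (e : I -> nat) w :
  (forall i, b i != 0) -> w != 0 ->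
  ((\prod_i ('X - (b i)%:P) ^+ e i).[(w^*)^-1])^* * w ^+ (\sum_i e i) =
  \prod_i (- (b i)^*) ^+ e i * (\prod_i ('X - (((b i)^*)^-1)%:P) ^+ e i).[w].
Proof.
move=> b0 w0; rewrite !horner_prod rmorph_prod -prodrXr -!big_split /=.
by apply: eq_bigr => i _; rewrite conj_horner_refl_XsubC_exp.
Qed.

Lemma conj_horner_refl_Xn w k : w != 0 -> (('X^k).[(w^*)^-1])^* * w ^+ k = 1.
Proof. by move=> w0; rewrite hornerXn rmorphXn fmorphV /= conjCK -exprMn mulVf ?expr1n. Qed.

End Reflection.

Section LocalExpansion.
Variable R : realType.
Local Notation C := R[i].
Implicit Types (P D : {poly C}) (a : C).

Lemma loc_num_decomp P a : P != 0 ->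
  P = loc_num P a * ('X - a%:P) ^+ mup a P /\ ~~ root (loc_num P a) a.
Proof.
move=> P0; have dvdP : ('X - a%:P) ^+ mup a P %| P by rewrite -mup_geq.
have EP : P = loc_num P a * ('X - a%:P) ^+ mup a P by rewrite /loc_num divpK.
split=> //; apply/negP; rewrite -dvdp_XsubCl => dvd1.
have : ('X - a%:P) ^+ (mup a P).+1 %| P.
  by rewrite [X in _ %| X]EP exprS; apply: dvdp_mul dvd1 (dvdpp _).
by rewrite -mup_geq // ltnn.
Qed.

Lemma sqrt_res_vanishesE P D a : P != 0 -> D != 0 ->
  sqrt_res_vanishes P D a <-> (wronskian (loc_num P a) (loc_num D a)).[a] = 0.
Proof.
move=> P0 D0; have [_ nP] := loc_num_decomp a P0; have [_ nD] := loc_num_decomp a D0.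
move: nP nD; rewrite /root => nP nD.
have val0 : loc_val P D a != 0 by rewrite mulf_neq0 ?invr_eq0.
have der0E : loc_der P D a = 0 <-> (wronskian (loc_num P a) (loc_num D a)).[a] = 0.
  rewrite /loc_der /wronskian hornerD hornerN !hornerM; split=> [/eqP|->]; last by rewrite mul0r.
  by rewrite mulf_eq0 invr_eq0 expf_eq0 (negbTE nD) andbF orbF => /eqP.
rewrite -der0E; split=> [van|der0 s0 s1 s0E].
  pose s0 := sqrtC (loc_val P D a).
  have s00 : 2%:R * s0 != 0 by rewrite mulf_neq0 ?sqrtC_eq0 ?pnatr_eq0.
  have := van s0 (loc_der P D a / (2%:R * s0)) (sqrtCK _).
  rewrite mulrC divfK // => /(_ erefl) /eqP.
  by rewrite mulf_eq0 invr_eq0 (negbTE s00) orbF => /eqP.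
rewrite der0 => /eqP; rewrite !mulf_eq0 pnatr_eq0 /= => /orP[/eqP s00|/eqP //].
by move: val0; rewrite -s0E s00 expr0n eqxx.
Qed.

End LocalExpansion.

Section QuadraticDifferential.
Variable R : realType.
Local Notation C := R[i].
Variables (m n : nat) (z : 'I_n -> C) (xi : 'I_m -> C).
Hypothesis z_unit : forall j, `|z j| = 1.
Hypothesis z_inj : injective z.
Hypothesis xi_inj : injective xi.
Hypothesis xi_neq0 : forall k, xi k != 0.
Hypothesis xi_neq_z : forall k j, xi k != z j.

Definition zeros_poly : {poly C} := \prod_(j < n) ('X - (z j)%:P) ^+ 2.
Definition poles_poly : {poly C} := \prod_(l < m) ('X - (xi l)%:P) ^+ 4.
Definition qnum := 'X^(2 * m) * zeros_poly.
Definition qden := 'X^(n + 2) * poles_poly.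
Definition qden_without k := 'X^(n + 2) * \prod_(l < m | l != k) ('X - (xi l)%:P) ^+ 4.

Definition stationarity k : C :=
  - (\sum_(j < n) 2%:R / (xi k - z j)) + (\sum_(l < m | l != k) 4%:R / (xi k - xi l))
  + ((n%:Z - 2 * m%:Z + 2)%:~R) / xi k.

Lemma z_neq0 j : z j != 0.
Proof. by rewrite -normr_eq0 z_unit oner_neq0. Qed.

Lemma xi_neq l k : l != k -> xi k != xi l.
Proof. by apply: contraNneq => /xi_inj ->. Qed.

Lemma qnum_neq0 : qnum != 0.
Proof. by rewrite mulf_neq0 ?expf_neq0 ?polyX_eq0 ?prod_XsubC_exp_neq0. Qed.

Lemma qden_neq0 : qden != 0.
Proof. by rewrite mulf_neq0 ?expf_neq0 ?polyX_eq0 ?prod_XsubC_exp_neq0. Qed.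

Lemma mup_qnum a :
  mup a qnum = ((if a == 0%R then 2 * m else 0) + mup a zeros_poly)%N.
Proof. by rewrite mupM ?expf_neq0 ?polyX_eq0 ?prod_XsubC_exp_neq0 // mup_Xn. Qed.

Lemma mup_qden a :
  mup a qden = ((if a == 0%R then n + 2 else 0) + mup a poles_poly)%N.
Proof. by rewrite mupM ?expf_neq0 ?polyX_eq0 ?prod_XsubC_exp_neq0 // mup_Xn. Qed.

Lemma mup_qnum_xi k : mup (xi k) qnum = 0%N.
Proof.
rewrite mup_qnum (negbTE (xi_neq0 k)) mup_prod_XsubC_exp_notin // => j.
by rewrite eq_sym xi_neq_z.
Qed.

Lemma mup_qden_xi k : mup (xi k) qden = 4%N.
Proof. by rewrite mup_qden (negbTE (xi_neq0 k)) mup_prod_XsubC_exp_inj. Qed.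

Lemma ord_q_z j : ord_at qnum qden (z j) = 2.
Proof.
rewrite /ord_at mup_qnum mup_qden (negbTE (z_neq0 j)) mup_prod_XsubC_exp_inj //.
by rewrite mup_prod_XsubC_exp_notin // => k; apply: xi_neq_z.
Qed.

Lemma ord_q_xi k : ord_at qnum qden (xi k) = - 4.
Proof. by rewrite /ord_at mup_qnum_xi mup_qden_xi. Qed.

Lemma ord_q_0 : ord_at qnum qden 0 = - (n%:Z + 2 - 2 * m%:Z).
Proof.
rewrite /ord_at mup_qnum mup_qden eqxx !mup_prod_XsubC_exp_notin => [|k|j].
- lia.
- exact: xi_neq0.
- exact: z_neq0.
Qed.

Lemma ord_q_other a : a != 0 -> (forall j, a != z j) -> (forall k, a != xi k) ->
  ord_at qnum qden a = 0.
Proof.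
move=> a0 az axi; rewrite /ord_at mup_qnum mup_qden (negbTE a0).
by rewrite !mup_prod_XsubC_exp_notin // => i; rewrite eq_sym ?az ?axi.
Qed.

Lemma proportional_q P D : P != 0 -> D != 0 ->
  (forall j, ord_at P D (z j) = 2) -> (forall k, ord_at P D (xi k) = - 4) ->
  ord_at P D 0 = - (n%:Z + 2 - 2 * m%:Z) ->
  (forall a, a != 0 -> (forall j, a != z j) -> (forall k, a != xi k) -> ord_at P D a = 0) ->
  exists2 kp, kp != 0 & P * qden = kp *: (D * qnum).
Proof.
move=> P0 D0 oz oxi o0 oth.
apply: eq_mup_scale; [exact: mulf_neq0 P0 qden_neq0 | exact: mulf_neq0 D0 qnum_neq0 |].
suff ordE a : ord_at P D a = ord_at qnum qden a.
  move=> a; rewrite (mupM _ P0 qden_neq0) (mupM _ D0 qnum_neq0).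
  by move: (ordE a); rewrite /ord_at; lia.
have [->|a0] := eqVneq a 0; first by rewrite o0 ord_q_0.
have [j /eqP <-|az] := pickP (fun j => z j == a); first by rewrite oz ord_q_z.
have [k /eqP <-|axi] := pickP (fun k => xi k == a); first by rewrite oxi ord_q_xi.
by rewrite oth ?ord_q_other // => i; rewrite eq_sym ?az ?axi.
Qed.

Lemma size_qnum : size qnum = (2 * m + 2 * n).+1.
Proof.
rewrite size_mul ?expf_neq0 ?polyX_eq0 ?prod_XsubC_exp_neq0 //.
by rewrite size_polyXn size_prod_XsubC_exp big_const_ord iter_addn_0; lia.
Qed.

Lemma size_qden : size qden = (n + 2 + 4 * m).+1.
Proof.
rewrite size_mul ?expf_neq0 ?polyX_eq0 ?prod_XsubC_exp_neq0 //.
by rewrite size_polyXn size_prod_XsubC_exp big_const_ord iter_addn_0; lia.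
Qed.

Lemma qden_split k : qden = ('X - (xi k)%:P) ^+ 4 * qden_without k.
Proof. by rewrite /qden /qden_without /poles_poly (bigD1 k) //= mulrCA. Qed.

Lemma qnum_xi_neq0 k : qnum.[xi k] != 0.
Proof.
rewrite hornerM hornerXn horner_prod mulf_neq0 ?expf_neq0 //.
by apply/prodf_neq0 => j _; rewrite horner_exp hornerXsubC expf_neq0 // subr_eq0.
Qed.

Lemma qden_without_xi_neq0 k : (qden_without k).[xi k] != 0.
Proof.
rewrite hornerM hornerXn horner_prod mulf_neq0 ?expf_neq0 //.
by apply/prodf_neq0 => l lk; rewrite horner_exp hornerXsubC expf_neq0 // subr_eq0 xi_neq.
Qed.

Lemma wronskian_q_xi k :
  (wronskian (qden_without k) qnum).[xi k] =
  (qden_without k).[xi k] * qnum.[xi k] * stationarity k.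
Proof.
have Lnum := is_logderM (is_logder_Xn (2 * m) (xi_neq0 k))
  (is_logder_prod (fun j => 2%N) (fun j (_ : true) => xi_neq_z k j)).
have Lden := is_logderM (is_logder_Xn (n + 2) (xi_neq0 k))
  (is_logder_prod (fun l => 4%N) (fun l (lk : l != k) => xi_neq lk)).
rewrite (wronskian_logder Lden Lnum) /stationarity; congr (_ * _).
have -> : ((n%:Z - 2 * m%:Z + 2)%:~R : C) = n%:R - 2 * m%:R + 2.
  by rewrite !(intrD, intrM, intrN).
by rewrite natrM natrD; field; apply: xi_neq0.
Qed.

Lemma sqrt_res_vanishes_stationary P D kp k : P != 0 -> D != 0 -> kp != 0 ->
  P * qden = kp *: (D * qnum) -> sqrt_res_vanishes P D (xi k) <-> stationarity k = 0.
Proof.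
move=> P0 D0 kp0 PD; rewrite sqrt_res_vanishesE //.
have [EP nP] := loc_num_decomp (xi k) P0; have [ED nD] := loc_num_decomp (xi k) D0.
set Pk := loc_num P (xi k) in EP nP *; set Dk := loc_num D (xi k) in ED nD *.
have mupD : mup (xi k) D = (mup (xi k) P + 4)%N.
  have := congr1 (mup (xi k)) PD.
  rewrite mupZ // (mupM _ P0 qden_neq0) (mupM _ D0 qnum_neq0).
  by rewrite mup_qnum_xi mup_qden_xi addn0.
have PkDk : Pk * qden_without k = kp%:P * (Dk * qnum).
  apply: (@mulIf _ (('X - (xi k)%:P) ^+ mup (xi k) D)).
    by rewrite expf_neq0 ?polyXsubC_eq0.
  transitivity (P * qden).
    by rewrite [in RHS]EP (qden_split k) mupD exprD mulrACA [qden_without k * _]mulrC.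
  by rewrite PD -mul_polyC [in LHS]ED -[RHS]mulrA [in RHS]mulrAC.
have uv0 := mulf_neq0 (qden_without_xi_neq0 k) (qnum_xi_neq0 k).
have := wronskian_eq0_proportional kp0 PkDk (mulf_neq0 nP nD) uv0.
rewrite wronskian_q_xi mulf_eq0 (negbTE uv0) /=.
by move=> E; split=> /eqP; [rewrite E | rewrite -E] => /eqP.
Qed.

Definition zeros_refl_coef : C := \prod_(j < n) (- (z j)^*) ^+ 2.
Definition poles_refl_coef : C := \prod_(l < m) (- (xi l)^*) ^+ 4.
Definition poles_refl_poly : {poly C} := \prod_(l < m) ('X - (((xi l)^*)^-1)%:P) ^+ 4.
Definition sym_defect_poly kp := zeros_poly *
  ((kp * poles_refl_coef) *: poles_refl_poly - (kp^* * zeros_refl_coef) *: poles_poly).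

Lemma z_conjV j : ((z j)^*)^-1 = z j.
Proof. by rewrite invC_norm norm_conjC z_unit expr1n invr1 mul1r conjCK. Qed.

Lemma conj_qnum_refl w : w != 0 ->
  (qnum.[(w^*)^-1])^* * w ^+ (2 * m + 2 * n) = zeros_refl_coef * zeros_poly.[w].
Proof.
move=> w0; rewrite hornerM rmorphM [w ^+ _]exprD mulrACA conj_horner_refl_Xn // mul1r.
have := conj_horner_refl_prod (fun j => 2%N) z_neq0 w0.
rewrite big_const_ord iter_addn_0 mulnC => ->; congr (_ * _.[w]).
by apply: eq_bigr => j _; rewrite z_conjV.
Qed.

Lemma conj_qden_refl w : w != 0 ->
  (qden.[(w^*)^-1])^* * w ^+ (n + 2 + 4 * m) = poles_refl_coef * poles_refl_poly.[w].
Proof.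
move=> w0; rewrite hornerM rmorphM [w ^+ _]exprD mulrACA conj_horner_refl_Xn // mul1r.
have := conj_horner_refl_prod (fun l => 4%N) xi_neq0 w0.
by rewrite big_const_ord iter_addn_0 mulnC.
Qed.

Lemma q_symmetry_defect kp w : w != 0 -> qden.[w] != 0 -> qden.[(w^*)^-1] != 0 ->
  exists2 f, f != 0 &
    kp * qnum.[w] / qden.[w] - w ^- 4 * (kp * qnum.[(w^*)^-1] / qden.[(w^*)^-1])^* =
    f * (sym_defect_poly kp).[w].
Proof.
move=> w0 dw du.
have Enum : (qnum.[(w^*)^-1])^* = zeros_refl_coef * zeros_poly.[w] / w ^+ (2 * m + 2 * n).
  by rewrite -conj_qnum_refl // mulfK ?expf_neq0.
have Eden : (qden.[(w^*)^-1])^* = poles_refl_coef * poles_refl_poly.[w] / w ^+ (n + 2 + 4 * m).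
  by rewrite -conj_qden_refl // mulfK ?expf_neq0.
have : poles_refl_coef * poles_refl_poly.[w] != 0.
  by rewrite -conj_qden_refl // mulf_neq0 ?conjC_eq0 ?expf_neq0.
rewrite mulf_eq0 negb_or => /andP[Bc0 Mr0].
have MM0 : poles_poly.[w] != 0 by move: dw; rewrite hornerM mulf_eq0 negb_or => /andP[].
exists (w ^+ (2 * m) / (w ^+ (n + 2) * poles_poly.[w] * poles_refl_coef * poles_refl_poly.[w])).
  by rewrite mulf_neq0 ?invr_eq0 ?mulf_neq0 ?expf_neq0.
rewrite !rmorphM fmorphV /= Enum Eden /sym_defect_poly /qnum /qden.
rewrite !(hornerM, hornerD, hornerN, hornerZ, hornerXn) !exprD.
have wm0 : w ^+ m != 0 by rewrite expf_neq0.
have wn0 : w ^+ n != 0 by rewrite expf_neq0.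
by field; rewrite Bc0 Mr0 MM0 w0 wm0 wn0.
Qed.

Lemma sym_defect_poly_eq0 P D kp : D != 0 -> P * qden = kp *: (D * qnum) ->
  (forall w, w != 0 -> D.[w] != 0 -> D.[(w^*)^-1] != 0 ->
     P.[w] / D.[w] = w ^- 4 * (P.[(w^*)^-1] / D.[(w^*)^-1])^*) ->
  sym_defect_poly kp = 0.
Proof.
move=> D0 PD sym; have DD0 : D * qden != 0 by rewrite mulf_neq0 ?qden_neq0.
have [q q0 q_refl] := exists_reflected_roots DD0.
apply: (@poly_eq0_off_roots _ _ ('X * (D * qden) * q)).
  by rewrite mulf_neq0 // mulf_neq0 ?polyX_eq0.
move=> w; rewrite rootM (rootM 'X) !negb_or rootX => /andP[/andP[w0 DDw] qw].
move: (q_refl w w0 qw) DDw; rewrite /root !(hornerM D) !mulf_eq0 !negb_or.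
move=> /andP[Du du] /andP[Dw dw].
have [f f0 defect] := q_symmetry_defect kp w0 dw du.
have := sym w w0 Dw Du; rewrite !(horner_div_scale PD) // => /eqP.
by rewrite -subr_eq0 defect mulf_eq0 (negbTE f0) => /eqP.
Qed.

Lemma refl_closed_of_defect0 kp : kp != 0 -> sym_defect_poly kp = 0 ->
  forall k, exists l, xi l = ((xi k)^*)^-1.
Proof.
move=> kp0 /eqP; have zeros0 : zeros_poly != 0 by apply: prod_XsubC_exp_neq0.
rewrite mulf_eq0 (negbTE zeros0) subr_eq0 => /eqP E k.
have := congr1 (horner^~ ((xi k)^*)^-1) E; rewrite /= !hornerZ.
rewrite {1}/poles_refl_poly horner_prod (bigD1 k) //= horner_exp hornerXsubC subrr expr0n /=.
rewrite !mul0r mulr0 => /esym/eqP; rewrite !mulf_eq0 conjC_eq0 (negbTE kp0) /=.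
have Ac0 : zeros_refl_coef != 0.
  by apply/prodf_neq0 => j _; rewrite expf_neq0 // oppr_eq0 conjC_eq0 z_neq0.
rewrite (negbTE Ac0) /= /poles_poly horner_prod prodf_seq_eq0 => /hasP[l _ /=].
by rewrite horner_exp hornerXsubC expf_eq0 subr_eq0 => /andP[_ /eqP ->]; exists l.
Qed.

Section ReflectionClosed.
Variable sg : 'I_m -> 'I_m.
Hypothesis sgE : forall k, xi (sg k) = ((xi k)^*)^-1.

Lemma sg_inj : injective sg.
Proof.
move=> k l sgkl; apply/xi_inj/(can_inj conjCK)/invr_inj.
by rewrite -!sgE sgkl.
Qed.

Lemma poles_refl_polyE : poles_refl_poly = poles_poly.
Proof.
rewrite /poles_poly (reindex_inj sg_inj); apply: eq_bigr => l _.
by rewrite sgE.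
Qed.

Lemma norm_prod_xi : \prod_(l < m) `|xi l| = 1.
Proof.
set x := \prod_(l < m) `|xi l|.
have x_gt0 : 0 < x by apply: prodr_gt0 => l _; rewrite normr_gt0.
have xV : x = x^-1.
  rewrite {1}/x (reindex_inj sg_inj) -prodfV; apply: eq_bigr => l _.
  by rewrite sgE normfV norm_conjC.
apply/eqP; rewrite -(@pexpr_eq1 _ _ 2) ?ltW //.
by rewrite expr2 {1}xV mulVf // lt0r_neq0.
Qed.

Lemma exists_sym_scale : exists2 kp, kp != 0 & sym_defect_poly kp = 0.
Proof.
have [kp kp0 kpE] : exists2 kp, kp != 0 & kp * poles_refl_coef = kp^* * zeros_refl_coef.
  apply: exists_conj_ratio; rewrite !normr_prod.
  rewrite (eq_bigr (fun l => `|xi l| ^+ 4)); last first.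
    by move=> l _; rewrite normrX normrN norm_conjC.
  rewrite prodrXl norm_prod_xi expr1n; apply: big1 => j _.
  by rewrite normrX normrN norm_conjC z_unit expr1n.
by exists kp; rewrite // /sym_defect_poly poles_refl_polyE kpE subrr mulr0.
Qed.

End ReflectionClosed.

Lemma in_QD_of_stationary : (forall k, exists l, xi l = ((xi k)^*)^-1) ->
  (forall k, stationarity k = 0) -> exists P D, in_QD z xi P D.
Proof.
move=> /fin_all_exists[sg sgE] stat; have [kp kp0 defect0] := exists_sym_scale sgE.
have PD : kp *: qnum * qden = kp *: (qden * qnum) by rewrite -scalerAl mulrC.
have ordZ a : ord_at (kp *: qnum) qden a = ord_at qnum qden a by rewrite /ord_at mupZ.
have Pq0 : kp *: qnum != 0 by rewrite scaler_eq0 negb_or kp0 qnum_neq0.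
exists (kp *: qnum), qden; split; first exact: Pq0.
split; first exact: qden_neq0.
split.
  move=> w w0 dw du; apply/eqP; rewrite !hornerZ -subr_eq0.
  by have [f _ ->] := q_symmetry_defect kp w0 dw du; rewrite defect0 horner0 mulr0.
split; first by move=> j; rewrite ordZ ord_q_z.
split; first split=> // k; first by rewrite ordZ ord_q_xi.
  exact/(sqrt_res_vanishes_stationary k Pq0 qden_neq0 kp0 PD).
split; first split; first by rewrite ordZ ord_q_0.
  by rewrite /qd_ord_inf size_scale // size_qnum size_qden; lia.
by move=> a a0 az axi; rewrite ordZ ord_q_other.
Qed.

End QuadraticDifferential.

Local Open Scope complex_scope.

Theorem mainTheorem4 (R : realType) (m n : nat) (z : 'I_n -> R[i]) (xi : 'I_m -> R[i])
  (hz_circ : forall j, `|z j| = 1)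
  (hz_inj : injective z)
  (hxi_inj : injective xi)
  (hxi_nz : forall k, xi k != 0)
  (hxi_z : forall k j, xi k != z j) :
  ((forall k, exists l, xi l = ((xi k)^*)^-1) /\
   (forall k : 'I_m,
      - (\sum_(j < n) 2%:R / (xi k - z j))
      + (\sum_(l < m | l != k) 4%:R / (xi k - xi l))
      + ((n%:Z - 2 * m%:Z + 2)%:~R) / xi k = 0))
  <->
  (exists P D : {poly R[i]}, in_QD z xi P D).
Proof.
split=> [[refl_closed stat]|[P [D [P0 [D0 [sym [oz [[_ _ oxi sres] [[o0 _] oth]]]]]]]]].
  exact: in_QD_of_stationary hz_circ hz_inj hxi_inj hxi_nz hxi_z refl_closed stat.
have [kp kp0 PD] := proportional_q hz_circ hz_inj hxi_inj hxi_nz hxi_z P0 D0 oz oxi o0 oth.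
have defect0 := sym_defect_poly_eq0 hz_circ hxi_nz D0 PD sym.
split; first exact: (refl_closed_of_defect0 hz_circ kp0 defect0).
by move=> k; apply/(sqrt_res_vanishes_stationary hxi_inj hxi_nz hxi_z k P0 D0 kp0 PD); exact: sres.
Qed.
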